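(* Let $G$ be an edge-maximal $K_{3,3}$-minor free graph of order $n\geq 374$ with $n-3\leq \Delta(G)\leq n-2$. Then $q(G)\leq n+2$.
   Context: All graphs are finite, simple and undirected. $q(G)$ is the largest eigenvalue of the signless Laplacian matrix $Q(G)=D(G)+A(G)$. $\Delta(G)$ is the maximum degree of $G$. A graph $H$ is a minor of $G$ if $H$ can be obtained from $G$ by deleting edges, contracting edges, or deleting vertices; $G$ is $H$-minor free if it has no minor isomorphic to $H$. $G$ is edge-maximal $H$-minor free if $G$ is $H$-minor free and adding any edge joining two nonadjacent vertices of $G$ produces a graph having $H$ as a minor. $K_{3,3}$ is the complete bipartite graph with both parts of size 3. *)

From HB Require Import structures.
From mathcomp Require Import all_boot all_order all_algebra.
From mathcomp Require Import reals.
Set Implicit Arguments. Unset Strict Implicit. Unset Printing Implicit Defensive.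
Import Order.TTheory GRing.Theory Num.Theory.

Definition simple_graph (T : finType) (g : rel T) : Prop :=
  symmetric g /\ irreflexive g.

Definition connected_in (T : finType) (g : rel T) (S : {set T}) : Prop :=
  forall x y, x \in S -> y \in S ->
    connect [rel a b | g a b && (a \in S) && (b \in S)] x y.

(* H (on U, relation h) is a minor of G (on T, relation g): branch-set model,
   i.e. pairwise disjoint nonempty connected vertex sets, one per vertex of H,
   with a G-edge between the sets of any two adjacent vertices of H. *)
Definition is_minor (U T : finType) (h : rel U) (g : rel T) : Prop :=
  exists phi : U -> {set T},
    [/\ forall u, phi u != set0,
        forall u v, u != v -> [disjoint phi u & phi v],
        forall u, connected_in g (phi u)
      & forall u v, h u v -> exists x y, [/\ x \in phi u, y \in phi v & g x y]].

Definition minor_free (U T : finType) (h : rel U) (g : rel T) : Prop :=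
  ~ is_minor h g.

(* K_{3,3}: vertices (side, index), adjacent iff on different sides. *)
Definition K33 : rel (bool * 'I_3) := fun u v => u.1 != v.1.

Definition add_edge (T : finType) (g : rel T) (x y : T) : rel T :=
  [rel a b | g a b || ((a == x) && (b == y)) || ((a == y) && (b == x))].

Definition edge_maximal_minor_free (U T : finType) (h : rel U) (g : rel T) : Prop :=
  minor_free h g /\
  forall x y, x != y -> ~~ g x y -> is_minor h (add_edge g x y).

Definition deg (T : finType) (g : rel T) (x : T) : nat := #|[set y | g x y]|.

Definition max_deg (n : nat) (g : rel 'I_n) : nat := \max_(x < n) deg g x.

Definition signless_laplacian (R : nzRingType) (n : nat) (g : rel 'I_n) : 'M[R]_n :=
  \matrix_(i, j) ((if i == j then (deg g i)%:R else 0) + (g i j)%:R)%R.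

Definition largest_eigenvalue (R : numFieldType) (n : nat) (A : 'M[R]_n) (l : R) : Prop :=
  eigenvalue A l /\ (forall a, eigenvalue A a -> a <= l)%R.

From mathcomp Require Import all_boot all_order all_algebra.
From mathcomp Require Import reals.
From mathcomp Require Import zify.
From mathcomp.algebra_tactics Require Import ring lra.
Import Order.TTheory GRing.Theory Num.Theory.

Set Implicit Arguments. Unset Strict Implicit. Unset Printing Implicit Defensive.

(* Let v be a vertex of maximum degree, so that v misses at most three
   vertices, and b a vertex of maximum degree among the others.  As G has no
   K_{3,3} subgraph, three vertices have at most two common neighbours, hence
   two vertices other than v have at most five.  Consequently
   \sum_(y ~ u) d_y <= 2 d_u + 5 n for u <> v, and every vertex other than v
   and b has degree at most (n + 5) / 2.  The bound follows from the weighted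
   row-sum bound for Q(G): if c > 0 and \sum_(j ~ i) c_j <= (n + 2 - d_i) c_i
   for all i, then q(G) <= n + 2.  The weights are c_v = 1,
   c_b = r = 9 / (4 (n + 1 - d_b)) and
   c_x = ([x ~ v] + r [x ~ b] + 1/8 + 5 d_x / n) / n otherwise. *)

Section SignlessLaplacianBound.
Variables (R : realFieldType) (n : nat) (g : rel 'I_n).
Local Open Scope ring_scope.

Lemma sum_rel_exchange (a b : 'I_n -> R) :
  \sum_j a j * \sum_(i | g i j) b i = \sum_i b i * \sum_(j | g i j) a j.
Proof.
under eq_bigr do rewrite big_distrr big_mkcond /=.
under [RHS]eq_bigr do rewrite big_distrr big_mkcond /=.
rewrite exchange_big; apply: eq_bigr => i _; apply: eq_bigr => j _.
by case: (g i j); rewrite // mulrC.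
Qed.

Lemma signless_laplacian_eigenvectorE (x : 'rV[R]_n) q j :
  x *m signless_laplacian R g = q *: x ->
  q * x 0 j = (deg g j)%:R * x 0 j + \sum_(i | g i j) x 0 i.
Proof.
move=> /(congr1 (fun m : 'rV_n => m 0 j)); rewrite !mxE => <-.
under eq_bigr => i _ do rewrite !mxE mulrDr.
rewrite big_split /= (bigD1 j) //= eqxx big1 => [|i /negbTE ->]; last by rewrite mulr0.
rewrite addr0 mulrC; congr (_ + _).
by rewrite [RHS]big_mkcond; apply: eq_bigr => i _; case: (g i j); rewrite ?mulr1 ?mulr0.
Qed.

Lemma eigenvalue_signless_laplacian_le (M : R) (c : 'I_n -> R) :
  (forall i, 0 < c i) ->
  (forall i, \sum_(j | g i j) c j <= (M - (deg g i)%:R) * c i) ->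
  forall q, eigenvalue (signless_laplacian R g) q -> q <= M.
Proof.
move=> c_gt0 c_row q /eigenvalueP[x /signless_laplacian_eigenvectorE x_eig x_neq0].
pose y j := `|x 0 j|.
have y_row j : (q - (deg g j)%:R) * y j <= \sum_(i | g i j) y i.
  apply: le_trans (ler_norm_sum _ _ _).
  have -> : \sum_(i | g i j) x 0 i = (q - (deg g j)%:R) * x 0 j.
    by rewrite mulrBl x_eig addrC addKr.
  by rewrite normrM ler_wpM2r ?normr_ge0 ?ler_norm.
have y_sum_gt0 : 0 < \sum_j c j * y j.
  have [j xj_neq0] : exists j, x 0 j != 0.
    apply/existsP; apply: contraR x_neq0; rewrite negb_exists => /forallP x0.
    by apply/eqP/rowP => j; rewrite mxE; apply/eqP; rewrite -[_ == _]negbK x0.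
  rewrite (bigD1 j) //=; apply: ltr_pwDl; first by rewrite mulr_gt0 ?normr_gt0.
  by apply: sumr_ge0 => i _; apply: mulr_ge0; [exact: ltW | exact: normr_ge0].
have : \sum_j c j * ((q - (deg g j)%:R) * y j)
       <= \sum_j c j * ((M - (deg g j)%:R) * y j).
  apply: (@le_trans _ _ (\sum_j c j * \sum_(i | g i j) y i)).
    by apply: ler_sum => j _; apply: ler_wpM2l; [exact: ltW | exact: y_row].
  rewrite sum_rel_exchange; apply: ler_sum => i _.
  rewrite mulrC mulrCA mulrA; apply: ler_wpM2r; [exact: normr_ge0 | exact: c_row].
rewrite -subr_ge0 -sumrB.
have -> : \sum_j (c j * ((M - (deg g j)%:R) * y j) - c j * ((q - (deg g j)%:R) * y j))
          = (M - q) * \sum_j c j * y j.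
  by rewrite mulr_sumr; apply: eq_bigr => j _; ring.
by rewrite pmulr_lge0 // subr_ge0.
Qed.

End SignlessLaplacianBound.

Lemma is_minor_of_injective (U T : finType) (h : rel U) (g : rel T) (f : U -> T) :
  injective f -> (forall u v, h u v -> g (f u) (f v)) -> is_minor h g.
Proof.
move=> f_inj f_hom; exists (fun u => [set f u]); split.
- by move=> u; apply/set0Pn; exists (f u); rewrite inE.
- by move=> u v uv; rewrite disjoints1 inE (inj_eq f_inj).
- by move=> u x y; rewrite !inE => /eqP-> /eqP->; exact: connect0.
- by move=> u v huv; exists (f u), (f v); rewrite !inE !eqxx f_hom.
Qed.

Lemma K33_minor_of_biclique (T : finType) (g : rel T) (a z : 3.-tuple T) :
  symmetric g -> irreflexive g -> uniq a -> uniq z ->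
  (forall x y, x \in a -> y \in z -> g x y) -> is_minor K33 g.
Proof.
move=> g_sym g_irr /tuple_uniqP a_inj /tuple_uniqP z_inj az.
have az_tnth i j : g (tnth a i) (tnth z j) by rewrite az ?mem_tnth.
apply: (@is_minor_of_injective _ _ _ _ (fun u => tnth (if u.1 then z else a) u.2)).
  move=> [[] i] [[] j] /= e.
  - by rewrite (z_inj _ _ e).
  - by move: (az_tnth j i); rewrite -e g_irr.
  - by move: (az_tnth i j); rewrite e g_irr.
  - by rewrite (a_inj _ _ e).
by move=> [[] i] [[] j] //= _; rewrite // g_sym.
Qed.

Section K33FreeGraph.
Variables (T : finType) (g : rel T).
Hypotheses (g_sym : symmetric g) (g_irr : irreflexive g) (g_K33_free : minor_free K33 g).
Local Notation nbhd x := [set y | g x y].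

Lemma card_nbhdC v : #|~: nbhd v| = #|T| - deg g v.
Proof. by rewrite cardsCs setCK. Qed.

Lemma deg_le_common_nbhd u b : deg g u <= #|nbhd u :&: nbhd b| + (#|T| - deg g b).
Proof.
rewrite -card_nbhdC /deg -(cardsID (nbhd b) (nbhd u)) leq_add2l.
by rewrite subset_leq_card // setDE subsetIr.
Qed.

Lemma card_common_nbhd3_le2 a1 a2 a3 : a1 != a2 -> a2 != a3 -> a3 != a1 ->
  #|nbhd a1 :&: nbhd a2 :&: nbhd a3| <= 2.
Proof.
move=> a12 a23 a31; rewrite leqNgt; apply/negP.
move=> /card_gt2P[z1 [z2 [z3 [[z1N z2N z3N] [z12 z23 z31]]]]].
apply: g_K33_free; apply: (@K33_minor_of_biclique _ _ [tuple a1; a2; a3] [tuple z1; z2; z3]) => //.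
- by rewrite /= !inE negb_or a12 a23 eq_sym a31.
- by rewrite /= !inE negb_or z12 z23 eq_sym z31.
move=> x y; rewrite !inE => xa /or3P[]/eqP->;
  [move: z1N | move: z2N | move: z3N]; rewrite !inE => /andP[/andP[g1 g2] g3];
  by case/or3P: xa => /eqP->.
Qed.

Lemma card_common_nbhd_le u w v : u != w -> w != v -> v != u ->
  #|nbhd u :&: nbhd w| <= 2 + #|~: nbhd v|.
Proof.
move=> uw wv vu; rewrite -(cardsID (nbhd v)) leq_add ?card_common_nbhd3_le2 //.
by rewrite subset_leq_card // setDE subsetIr.
Qed.

Lemma sum_deg_nbhd u : \sum_(y | g u y) deg g y = \sum_k #|nbhd u :&: nbhd k|.
Proof.
under eq_bigr do rewrite /deg -sum1dep_card.
rewrite (exchange_big_dep predT) //=; apply: eq_bigr => k _.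
by rewrite sum1dep_card; apply: eq_card => y; rewrite !inE (g_sym y k).
Qed.

Lemma sum_deg_nbhd_le u v : u != v -> #|~: nbhd v| <= 3 ->
  \sum_(y | g u y) deg g y <= 2 * deg g u + 5 * #|T|.
Proof.
move=> uv v_co3; rewrite sum_deg_nbhd (bigD1 u) // (bigD1 v) 1?eq_sym //=.
rewrite setIid addnA mul2n -addnn leq_add ?leq_add2l ?subset_leq_card ?subsetIl //.
apply: (@leq_trans (\sum_(k | (k != u) && (k != v)) 5)).
  apply: leq_sum => k /andP[ku kv].
  by apply: leq_trans (card_common_nbhd_le _ kv _) _; rewrite 1?eq_sym // -[5]/(2 + 3) leq_add2l.
by rewrite sum_nat_const mulnC leq_mul2l max_card orbT.
Qed.

Lemma high_deg_unique b1 b2 v : b1 != v -> b2 != v -> #|~: nbhd v| <= 3 ->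
  #|T| + 6 <= 2 * deg g b1 -> #|T| + 6 <= 2 * deg g b2 -> b1 = b2.
Proof.
move=> b1v b2v v_co3 b1_high b2_high; case: (eqVneq b1 b2) => // b12.
have vb1 : v != b1 by rewrite eq_sym.
have := card_common_nbhd_le b12 b2v vb1.
have := cardsUI (nbhd b1) (nbhd b2).
have := max_card (nbhd b1 :|: nbhd b2).
move: b1_high b2_high; rewrite /deg; lia.
Qed.

End K33FreeGraph.

(* The row inequalities at v, at b and at the other vertices x, with d = d_x,
   h = [x ~ v] + r [x ~ b], A = \sum_(j ~ x) h_j and D = \sum_(j ~ x) d_j. *)
Section WeightArithmetic.
Variable R : realFieldType.
Local Open Scope ring_scope.
Implicit Types n d r h A D Y : R.

Lemma top_row_arith n d r h A D Y :
  374 <= n -> 0 <= d -> d <= n - 2 -> 0 <= r -> h <= r ->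
  A <= d + r * n -> D <= d * Y + n -> 0 <= Y ->
  (r <= 3/20 /\ 2 * Y <= n + 5) \/ (r <= 3/4 /\ Y <= 18) ->
  h + (A + d / 8 + 5 * D / n) / n <= n + 2 - d.
Proof.
move=> n_ge d_ge0 d_le r_ge0 h_le A_le D_le Y_ge0 rY.
have n_neq0 : n != 0 by rewrite gt_eqF //; lra.
have nn_gt0 : 0 < n * n by rewrite mulr_gt0 //; lra.
apply: le_trans (_ : r + (A + d / 8 + 5 * D / n) / n <= _); first by rewrite lerD2r.
have -> : r + (A + d / 8 + 5 * D / n) / n
          = (r * (n * n) + n * A + n * d / 8 + 5 * D) / (n * n) by field.
rewrite ler_pdivrMr //.
have : n * A <= n * (d + r * n) by apply: ler_wpM2l; lra.
have : d * Y <= n * Y by apply: ler_wpM2r; lra.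
have : 4 * (n * n) <= (n + 2 - d) * (n * n) by apply: ler_wpM2r; lra.
have : d * n <= n * n by apply: ler_wpM2r; lra.
have : 374 * n <= n * n by apply: ler_wpM2r; lra.
case: rY => [[r_le Y_le]|[r_le Y_le]].
  have : r * (n * n) <= 3/20 * (n * n) by apply: ler_wpM2r; lra.
  have : n * (2 * Y) <= n * (n + 5) by apply: ler_wpM2l; lra.
  nra.
have : r * (n * n) <= 3/4 * (n * n) by apply: ler_wpM2r; lra.
have : n * Y <= n * 18 by apply: ler_wpM2l; lra.
nra.
Qed.

Lemma second_row_arith n d r h A D :
  374 <= n -> 0 <= d -> d <= n - 2 -> 0 <= r -> r * (n + 1 - d) = 9/4 ->
  h <= 1 -> A <= d + r * d -> D <= 2 * d + 5 * n ->
  h + (A + d / 8 + 5 * D / n) / n <= (n + 2 - d) * r.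
Proof.
move=> n_ge d_ge0 d_le r_ge0 rE h_le A_le D_le.
have n_neq0 : n != 0 by rewrite gt_eqF //; lra.
have nn_gt0 : 0 < n * n by rewrite mulr_gt0 //; lra.
apply: le_trans (_ : 1 + (A + d / 8 + 5 * D / n) / n <= _); first by rewrite lerD2r.
have -> : 1 + (A + d / 8 + 5 * D / n) / n
          = (n * n + n * A + n * d / 8 + 5 * D) / (n * n) by field.
have -> : (n + 2 - d) * r = 9/4 + r by rewrite -rE; ring.
rewrite ler_pdivrMr //.
have : n * A <= n * (d + r * d) by apply: ler_wpM2l; lra.
have : n * (r * d) <= n * (r * n).
  by apply: ler_wpM2l; [lra | apply: ler_wpM2l; lra].
have : d * n <= n * n by apply: ler_wpM2r; lra.
have : 374 * n <= n * n by apply: ler_wpM2r; lra.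
nra.
Qed.

Lemma other_row_arith n d r h A D :
  374 <= n -> 0 <= d -> 2 * d <= n + 5 -> 0 <= r -> r <= 3/4 ->
  0 <= h -> h <= 1 + r -> r * d <= 21/4 -> A <= d + 5 * r -> D <= 2 * d + 5 * n ->
  h + (A + d / 8 + 5 * D / n) / n <= (n + 2 - d) * ((h + 1/8 + 5 * d / n) / n).
Proof.
move=> n_ge d_ge0 d_le r_ge0 r_le h_ge0 h_le rd_le A_le D_le.
have n_neq0 : n != 0 by rewrite gt_eqF //; lra.
have nn_gt0 : 0 < n * n by rewrite mulr_gt0 //; lra.
have -> : h + (A + d / 8 + 5 * D / n) / n
          = (n * n * h + n * A + n * d / 8 + 5 * D) / (n * n) by field.
have -> : (n + 2 - d) * ((h + 1/8 + 5 * d / n) / n)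
          = (n + 2 - d) * (n * h + n / 8 + 5 * d) / (n * n) by field.
rewrite ler_pM2r ?invr_gt0 //.
have : n * (d * h) <= n * (d + 21/4).
  by apply: ler_wpM2l; [lra | apply: le_trans (_ : d * (1 + r) <= _); [apply: ler_wpM2l | ]; lra].
have : n * A <= n * (d + 5 * r) by apply: ler_wpM2l; lra.
have : d * (2 * d) <= d * (n + 5) by apply: ler_wpM2l.
have : n * r <= n * (3/4) by apply: ler_wpM2l; lra.
have : 0 <= n * h by apply: mulr_ge0; lra.
have : 374 * n <= n * n by apply: ler_wpM2r; lra.
have : 0 <= d * n by apply: mulr_ge0; lra.
nra.
Qed.

End WeightArithmetic.

Section IndicatorSums.
Variables (R : nzSemiRingType) (T : finType).
Local Open Scope ring_scope.

Lemma sum_indicator1 (P : pred T) (a : T) :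
  \sum_(j | P j) ((j == a)%:R : R) = (P a)%:R.
Proof.
rewrite big_mkcond (bigD1 a) //= eqxx big1 => [|j /negbTE->]; last by case: (P j).
by case: (P a); rewrite addr0.
Qed.

Lemma sum_indicator_card (P Q : pred T) :
  \sum_(j | P j) ((Q j)%:R : R) = (#|[set j | P j && Q j]|)%:R.
Proof.
rewrite -sum1dep_card natr_sum big_mkcondr /=.
by apply: eq_bigr => j _; case: (Q j).
Qed.

Lemma sumr1_card (P : pred T) : \sum_(j | P j) (1 : R) = (#|[set j | P j]|)%:R.
Proof. by rewrite -sum1dep_card natr_sum. Qed.

End IndicatorSums.

Lemma natr_bool_le1 (R : numDomainType) (c : bool) : (c%:R <= 1 :> R)%R.
Proof. by case: c; rewrite ?ler01 ?lexx. Qed.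

Section Weights.
Variables (R : realFieldType) (n : nat) (g : rel 'I_n) (v b : 'I_n).
Hypotheses (g_sym : symmetric g) (g_irr : irreflexive g) (g_K33_free : minor_free K33 g).
Hypotheses (n_ge374 : 374 <= n) (bv : b != v).
Hypotheses (deg_v_ge : n - 3 <= deg g v) (deg_v_max : forall x, deg g x <= deg g v).
Hypotheses (deg_v_le : deg g v <= n - 2) (deg_b_max : forall x, x != v -> deg g x <= deg g b).
Local Notation nbhd x := [set y | g x y].

Lemma nbhdC_top_le3 : #|~: nbhd v| <= 3.
Proof. by rewrite card_nbhdC card_ord; lia. Qed.

Lemma deg_le_n2 x : deg g x <= n - 2.
Proof. exact: leq_trans (deg_v_max x) deg_v_le. Qed.

Lemma deg_other_le_half u : u != v -> u != b -> 2 * deg g u <= n + 5.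
Proof.
move=> uv ub; rewrite leqNgt; apply: contra ub => u_high; apply/eqP.
by apply: (high_deg_unique g_sym g_irr g_K33_free uv bv nbhdC_top_le3);
  rewrite card_ord; have := deg_b_max uv; lia.
Qed.

Lemma common_nbhd_second_le5 u : u != v -> u != b -> #|nbhd u :&: nbhd b| <= 5.
Proof.
move=> uv ub; have vu : v != u by rewrite eq_sym.
have := card_common_nbhd_le g_sym g_irr g_K33_free ub bv vu.
by have := nbhdC_top_le3; lia.
Qed.

Lemma deg_other_le u : u != v -> u != b -> deg g u <= 5 + (n - deg g b).
Proof.
move=> uv ub; apply: leq_trans (deg_le_common_nbhd g u b) _.
by rewrite card_ord leq_add2r common_nbhd_second_le5.
Qed.

Local Open Scope ring_scope.

Let n_ge374R : 374 <= n%:R :> R.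
Proof. by rewrite (ler_nat R 374). Qed.

Let n_gt0 : 0 < n%:R :> R.
Proof. by have := n_ge374R; lra. Qed.

Let deg_le_n2R x : (deg g x)%:R <= n%:R - 2 :> R.
Proof.
have : (deg g x + 2 <= n)%N by have := deg_le_n2 x; lia.
by rewrite -(ler_nat R) natrD => ?; lra.
Qed.

Let sum_deg_nbhd_leR u : u != v ->
  (\sum_(j | g u j) deg g j)%:R <= 2 * (deg g u)%:R + 5 * n%:R :> R.
Proof.
move=> uv; have := sum_deg_nbhd_le g_sym g_irr g_K33_free uv nbhdC_top_le3.
by rewrite card_ord -(ler_nat R) natrD !natrM.
Qed.

Let s : R := n%:R + 1 - (deg g b)%:R.
(* Chosen so that (n + 2 - d_b) r = 9/4 + r, just above the row sum of b, about 2 + 1/8 + r. *)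
Let r : R := 9/4 / s.

Let s_ge3 : 3 <= s.
Proof.
have : (deg g b + 2 <= n)%N by have := deg_le_n2 b; lia.
by rewrite -(ler_nat R) natrD /s => ?; lra.
Qed.

Let rsE : r * s = 9/4.
Proof. by rewrite /r divfK // gt_eqF //; have := s_ge3; lra. Qed.

Let r_gt0 : 0 < r.
Proof. by rewrite /r divr_gt0 //; have := s_ge3; lra. Qed.

Let r_le34 : r <= 3/4.
Proof. by have := s_ge3; have := rsE; have := r_gt0; nra. Qed.

Let r_deg_other u : u != v -> u != b -> r * (deg g u)%:R <= 21/4.
Proof.
move=> uv ub; have : (deg g u + deg g b <= n + 5)%N.
  by have := deg_other_le uv ub; have := deg_le_n2 b; lia.
rewrite -(ler_nat R) !natrD => deg_le.
have : r * (deg g u)%:R <= r * (s + 4).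
  by apply: ler_wpM2l; [exact: ltW | rewrite /s; lra].
by have := rsE; have := r_le34; nra.
Qed.

Definition vertex_bias x : R := (g x v)%:R + r * (g x b)%:R.

Definition base_weight x : R :=
  (vertex_bias x + 1/8 + 5 * (deg g x)%:R / n%:R) / n%:R.

Definition weight x : R := if x == v then 1 else if x == b then r else base_weight x.

Lemma vertex_bias_ge0 x : 0 <= vertex_bias x.
Proof. by apply: addr_ge0; [exact: ler0n | apply: mulr_ge0; [exact: ltW | exact: ler0n]]. Qed.

Lemma vertex_bias_le x : vertex_bias x <= 1 + r.
Proof.
apply: lerD; first exact: natr_bool_le1.
by rewrite -[X in _ <= X]mulr1; apply: ler_wpM2l; [exact: ltW | exact: natr_bool_le1].
Qed.

Lemma base_weight_gt0 x : 0 < base_weight x.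
Proof.
rewrite /base_weight divr_gt0 //; have := vertex_bias_ge0 x.
have : 0 <= 5 * (deg g x)%:R / n%:R :> R by apply: divr_ge0; [apply: mulr_ge0 |]; exact: ler0n.
lra.
Qed.

Lemma weight_gt0 x : 0 < weight x.
Proof. by rewrite /weight; case: ifP => // _; case: ifP => // _; exact: base_weight_gt0. Qed.

Lemma weight_le x : weight x <= (x == v)%:R + r * (x == b)%:R + base_weight x.
Proof.
have w_gt0 := base_weight_gt0 x; have r_ge0 := ltW r_gt0.
by rewrite /weight; case: (x == v); case: (x == b); rewrite /= ?mulr1n ?mulr0n; lra.
Qed.

Lemma sum_base_weight_nbhd i :
  \sum_(j | g i j) base_weight j =
  ((#|nbhd i :&: nbhd v|)%:R + r * (#|nbhd i :&: nbhd b|)%:R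
   + (deg g i)%:R / 8 + 5 * (\sum_(j | g i j) deg g j)%:R / n%:R) / n%:R.
Proof.
have nbhd_sym a : [set j | g i j && g j a] = nbhd i :&: nbhd a.
  by apply/setP => j; rewrite !inE (g_sym j a).
rewrite -mulr_suml !big_split /= -mulr_sumr !sum_indicator_card !nbhd_sym.
by rewrite -!mulr_suml -mulr_sumr sumr1_card -/(deg g i) natr_sum.
Qed.

Lemma sum_weight_nbhd_le i :
  \sum_(j | g i j) weight j <=
  vertex_bias i + ((#|nbhd i :&: nbhd v|)%:R + r * (#|nbhd i :&: nbhd b|)%:R
   + (deg g i)%:R / 8 + 5 * (\sum_(j | g i j) deg g j)%:R / n%:R) / n%:R.
Proof.
apply: le_trans (ler_sum _ (fun j _ => weight_le j)) _.
rewrite !big_split /= -mulr_sumr !sum_indicator1 sum_base_weight_nbhd.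
by rewrite /vertex_bias (g_sym i v) (g_sym i b).
Qed.

(* If b has degree close to n, all other vertices have small degree; otherwise r is small. *)
Let other_deg_bound : exists Y : R, [/\ 0 <= Y,
    forall u, u != v -> u != b -> (deg g u)%:R <= Y &
    (r <= 3/20 /\ 2 * Y <= n%:R + 5) \/ (r <= 3/4 /\ Y <= 18)].
Proof.
have n_ge := n_ge374R; have r_le := r_le34.
case: (leqP n (deg g b + 13)) => [n_le | n_gt].
  exists 18; split; [lra | move=> u uv ub | by right; split; [|lra]].
  have : (deg g u <= 18)%N by have := deg_other_le uv ub; lia.
  by rewrite -(ler_nat R).
exists ((n%:R + 5) / 2); split; [lra | move=> u uv ub | left; split; [|lra]].
  by have := deg_other_le_half uv ub; rewrite -(ler_nat R) natrD natrM => ?; lra.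
have : (deg g b + 14 <= n)%N by lia.
rewrite -(ler_nat R) natrD => ?; have : 15 <= s by rewrite /s; lra.
by have := rsE; have := r_gt0; nra.
Qed.

Let sum_deg_nbhd_top_le (Y : R) : 0 <= Y ->
  (forall u, u != v -> u != b -> (deg g u)%:R <= Y) ->
  (\sum_(j | g v j) deg g j)%:R <= (deg g v)%:R * Y + n%:R.
Proof.
move=> Y_ge0 deg_le_Y.
rewrite natr_sum; apply: le_trans (_ : _ <= \sum_(j | g v j) (Y + (j == b)%:R * n%:R)) _.
  apply: ler_sum => j gvj; case: eqVneq => [->|jb].
    by rewrite /= mulr1n mul1r; have := deg_le_n2R b; lra.
  rewrite mul0r addr0 deg_le_Y //.
  by apply: contraTneq gvj => ->; rewrite g_irr.
rewrite big_split /= -mulr_suml sum_indicator1 -[Y]mulr1 -mulr_sumr sumr1_card -/(deg g v).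
by have := n_ge374R; have := natr_bool_le1 R (g v b); have := ler0n R (deg g v); nra.
Qed.

Lemma weight_row_top :
  \sum_(j | g v j) weight j <= (n%:R + 2 - (deg g v)%:R) * weight v.
Proof.
have [Y [Y_ge0 deg_le_Y rY]] := other_deg_bound.
have -> : weight v = 1 by rewrite /weight eqxx.
rewrite mulr1; apply: le_trans (sum_weight_nbhd_le v) _.
apply: (@top_row_arith _ _ _ r _ _ _ Y) => //; first exact: ltW.
- by rewrite /vertex_bias g_irr add0r ler_piMr ?natr_bool_le1 ?ltW.
- rewrite setIid; apply: lerD => //; apply: ler_wpM2l; first exact: ltW.
  by rewrite ler_nat -[X in (_ <= X)%N]card_ord max_card.
- exact: sum_deg_nbhd_top_le.
Qed.

Lemma weight_row_second :
  \sum_(j | g b j) weight j <= (n%:R + 2 - (deg g b)%:R) * weight b.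
Proof.
have -> : weight b = r by rewrite /weight (negbTE bv) eqxx.
apply: le_trans (sum_weight_nbhd_le b) _.
apply: second_row_arith => //; first exact: ltW.
- by rewrite /vertex_bias g_irr mulr0 addr0 natr_bool_le1.
- rewrite setIid; apply: lerD; first by rewrite ler_nat subset_leq_card ?subsetIl.
  by rewrite mulrC.
- exact: sum_deg_nbhd_leR.
Qed.

Lemma weight_row_other i : i != v -> i != b ->
  \sum_(j | g i j) weight j <= (n%:R + 2 - (deg g i)%:R) * weight i.
Proof.
move=> iv ib; have -> : weight i = base_weight i by rewrite /weight (negbTE iv) (negbTE ib).
apply: le_trans (sum_weight_nbhd_le i) _; rewrite /base_weight.
apply: (other_row_arith (r := r)) => //.
- by have := deg_other_le_half iv ib; rewrite -(ler_nat R) natrD natrM.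
- exact: ltW.
- exact: vertex_bias_ge0.
- exact: vertex_bias_le.
- exact: r_deg_other.
- apply: lerD; first by rewrite ler_nat subset_leq_card ?subsetIl.
  rewrite mulrC; apply: ler_wpM2r; first exact: ltW.
  by rewrite (ler_nat R _ 5) common_nbhd_second_le5.
- exact: sum_deg_nbhd_leR.
Qed.

Lemma eigenvalue_le_n2 q : eigenvalue (signless_laplacian R g) q -> q <= n%:R + 2.
Proof.
apply: (eigenvalue_signless_laplacian_le weight_gt0) => i.
case: (eqVneq i v) => [->|iv]; first exact: weight_row_top.
case: (eqVneq i b) => [->|ib]; first exact: weight_row_second.
exact: weight_row_other.
Qed.

End Weights.

Theorem lemma4p2 (R : realType) (n : nat) (g : rel 'I_n) :
  simple_graph g ->
  edge_maximal_minor_free K33 g ->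
  374 <= n ->
  n - 3 <= max_deg g <= n - 2 ->
  forall q : R, largest_eigenvalue (signless_laplacian R g) q ->
  (q <= n%:R + 2)%R.
Proof.
move=> [g_sym g_irr] [g_K33_free _] n_ge374 /andP[deg_v_ge deg_v_le] q [q_eig _].
have n_gt0 : 0 < #|'I_n| by rewrite card_ord; lia.
have [v max_degE] := bigop.eq_bigmax (deg g) n_gt0.
have deg_v_max x : deg g x <= deg g v by rewrite -max_degE leq_bigmax.
rewrite /max_deg max_degE in deg_v_ge deg_v_le.
have /set0Pn[u] : [set y | g v y] != set0 by rewrite -card_gt0 -/(deg g v); lia.
rewrite inE => gvu; have uv : u != v by apply: contraTneq gvu => ->; rewrite g_irr.
case: (@arg_maxnP _ u [pred x | x != v] (deg g) uv) => b bv deg_b_max.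
exact: (eigenvalue_le_n2 g_sym g_irr g_K33_free n_ge374 bv deg_v_ge deg_v_max deg_v_le deg_b_max q_eig).
Qed.
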